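(* There exists a permutation of the positive integers that does not contain any 4-term arithmetic progression with odd common difference as a subsequence.
   Context: A permutation of the positive integers is a sequence $(a_1,a_2,\ldots)$ in which every positive integer appears exactly once. A sequence contains a $k$-term arithmetic progression with common difference $d\neq 0$ as a subsequence if there are indices $i_1<i_2<\cdots<i_k$ with $a_{i_{m+1}} - a_{i_m} = d$ for all $1\le m<k$. The difference $d$ may be positive or negative. *)

(* Sequences a_1, a_2, ... are modelled as a : nat -> Z with a_{i+1} = a i. *)
From Stdlib Require Import ZArith Arith.
Open Scope Z_scope.

Definition is_perm_pos (a : nat -> Z) : Prop :=
  (forall i, 0 < a i) /\
  (forall z, 0 < z -> exists i, a i = z /\ forall j, a j = z -> j = i).

Definition contains_AP (a : nat -> Z) (k : nat) (d : Z) : Prop :=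
  exists idx : nat -> nat,
    (forall m, (m + 1 < k)%nat -> (idx m < idx (S m))%nat) /\
    (forall m, (m + 1 < k)%nat -> a (idx (S m)) - a (idx m) = d).

(* The permutation 1, 3, 2, 5, 7, 4, 9, 11, 6, ... lists the odd numbers in
   increasing order at twice the speed of the even numbers: block j is
   4j+1, 4j+3, 2j+2.  Hence an odd x comes before an even y whenever x < 2y.
   In a progression x, x+d, x+2d, x+3d of positive terms with d odd the
   parities alternate.  If x+2d is even, then x+3d < 2(x+2d) is odd and must
   come before x+2d; if x+2d is odd, then x+2d < 2(x+d) with x+d even, so
   x+2d must come before x+d.  Either way the progression is not a
   subsequence. *)
From Stdlib Require Import ZArith Arith Lia.
Open Scope Z_scope.

Lemma is_perm_pos_intro (a : nat -> Z) :
  (forall i, 0 < a i) ->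
  (forall i j, a i = a j -> i = j) ->
  (forall z, 0 < z -> exists i, a i = z) ->
  is_perm_pos a.
Proof.
  intros Hpos Hinj Hsurj. split; [exact Hpos|].
  intros z Hz. destruct (Hsurj z Hz) as [i Hi].
  exists i. split; [exact Hi|]. intros j Hj. apply Hinj. congruence.
Qed.

Lemma no_odd_AP4_of_odd_before_double_even (a : nat -> Z) :
  (forall i, 0 < a i) ->
  (forall i k, Z.odd (a i) = true -> Z.even (a k) = true ->
     a i < 2 * a k -> (i < k)%nat) ->
  forall d, Z.odd d = true -> ~ contains_AP a 4 d.
Proof.
  intros Hpos Hbefore d Hd [idx [Hlt Hdiff]].
  pose proof (Hlt 1%nat ltac:(lia)). pose proof (Hlt 2%nat ltac:(lia)).
  pose proof (Hdiff 0%nat ltac:(lia)) as D0.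
  pose proof (Hdiff 1%nat ltac:(lia)) as D1.
  pose proof (Hdiff 2%nat ltac:(lia)) as D2.
  pose proof (Hpos (idx 0%nat)). pose proof (Hpos (idx 3%nat)).
  apply Z.odd_spec in Hd as [c Hc].
  destruct (Z.Even_or_Odd (a (idx 2%nat))) as [[e He]|[e He]].
  - assert (idx 3 < idx 2)%nat; [|lia].
    apply Hbefore; [apply Z.odd_spec; exists (e + c)
                   |apply Z.even_spec; exists e|]; lia.
  - assert (idx 2 < idx 1)%nat; [|lia].
    apply Hbefore; [apply Z.odd_spec; exists e
                   |apply Z.even_spec; exists (e - c)|]; lia.
Qed.

Definition odd_even_interleave (n : nat) : Z :=
  let j := Z.of_nat (n / 3) in
  match (n mod 3)%nat with
  | O => 4 * j + 1
  | 1%nat => 4 * j + 3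
  | _ => 2 * j + 2
  end.

Lemma odd_even_interleave_block (j r : nat) : (r < 3)%nat ->
  odd_even_interleave (3 * j + r) =
  match r with
  | O => 4 * Z.of_nat j + 1
  | 1%nat => 4 * Z.of_nat j + 3
  | _ => 2 * Z.of_nat j + 2
  end.
Proof.
  intros Hr. unfold odd_even_interleave.
  replace ((3 * j + r) / 3)%nat with j by (apply (Nat.div_unique _ 3 _ r); lia).
  replace ((3 * j + r) mod 3)%nat with r by (apply (Nat.mod_unique _ 3 j); lia).
  destruct r as [|[|[|r]]]; lia.
Qed.

Lemma odd_even_interleave_cases (n : nat) : exists j : nat,
  ((n = 3 * j)%nat /\ odd_even_interleave n = 4 * Z.of_nat j + 1) \/
  ((n = 3 * j + 1)%nat /\ odd_even_interleave n = 4 * Z.of_nat j + 3) \/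
  ((n = 3 * j + 2)%nat /\ odd_even_interleave n = 2 * Z.of_nat j + 2).
Proof.
  pose proof (Nat.div_mod n 3 ltac:(lia)) as Hn.
  pose proof (Nat.mod_upper_bound n 3 ltac:(lia)).
  set (j := (n / 3)%nat) in Hn. set (r := (n mod 3)%nat) in *.
  clearbody j r. subst n. exists j.
  rewrite odd_even_interleave_block by assumption.
  destruct r as [|[|[|r]]]; lia.
Qed.

Ltac interleave_cases n :=
  let j := fresh "j" in
  destruct (odd_even_interleave_cases n) as [j [[-> ->]|[[-> ->]|[-> ->]]]].

Lemma odd_even_interleave_pos (n : nat) : 0 < odd_even_interleave n.
Proof. interleave_cases n; lia. Qed.

Lemma odd_even_interleave_inj (i k : nat) :
  odd_even_interleave i = odd_even_interleave k -> i = k.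
Proof. interleave_cases i; interleave_cases k; lia. Qed.

Lemma odd_even_interleave_surj (z : Z) : 0 < z ->
  exists n, odd_even_interleave n = z.
Proof.
  intros Hz.
  pose proof (Z.div_mod z 4 ltac:(lia)).
  pose proof (Z.mod_pos_bound z 4 ltac:(lia)).
  assert (0 <= z / 4) by (apply Z.div_pos; lia).
  assert (z mod 4 = 0 \/ z mod 4 = 1 \/ z mod 4 = 2 \/ z mod 4 = 3)
    as [Hm|[Hm|[Hm|Hm]]] by lia.
  - exists (3 * Z.to_nat (2 * (z / 4) - 1) + 2)%nat.
    rewrite odd_even_interleave_block by lia. lia.
  - exists (3 * Z.to_nat (z / 4) + 0)%nat.
    rewrite odd_even_interleave_block by lia. lia.
  - exists (3 * Z.to_nat (2 * (z / 4)) + 2)%nat.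
    rewrite odd_even_interleave_block by lia. lia.
  - exists (3 * Z.to_nat (z / 4) + 1)%nat.
    rewrite odd_even_interleave_block by lia. lia.
Qed.

Lemma odd_even_interleave_odd_before_double_even (i k : nat) :
  Z.odd (odd_even_interleave i) = true ->
  Z.even (odd_even_interleave k) = true ->
  odd_even_interleave i < 2 * odd_even_interleave k -> (i < k)%nat.
Proof.
  intros Hi%Z.odd_spec Hk%Z.even_spec Hlt.
  destruct Hi as [x Hx], Hk as [y Hy].
  revert Hx Hy Hlt; interleave_cases i; interleave_cases k; lia.
Qed.

Theorem theorem2 :
  exists a : nat -> Z, is_perm_pos a /\
    forall d : Z, d <> 0 -> Z.odd d = true -> ~ contains_AP a 4 d.
Proof.
  exists odd_even_interleave. split.
  - apply is_perm_pos_intro.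
    + exact odd_even_interleave_pos.
    + exact odd_even_interleave_inj.
    + exact odd_even_interleave_surj.
  - intros d _.
    apply no_odd_AP4_of_odd_before_double_even.
    + exact odd_even_interleave_pos.
    + exact odd_even_interleave_odd_before_double_even.
Qed.
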